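(* Consider the one-stage adversarial networked control (ANC) game described in the context, and suppose that for every $x\in\mathbb{R}^n$ and every $a\in\mathcal{A}$ the functions $u\mapsto\Sigma(F(x,0),u,a)$ and $u\mapsto\Sigma(F(x,u),u,a)$ are continuous, coercive and convex functions $\mathbb{R}^m\to\mathbb{R}$. Then for every initial pair $(x,s)\in\mathbb{R}^n\times\mathcal{F}$ the game has a finite value, $-\infty<J_1=J_2<\infty$, and the game has a (possibly non-unique) saddle point $(u^*,p^* )$. Furthermore, for every $x$ there exists a compact set $U(x)\subset\mathbb{R}^m$ which contains the controller's optimal response $u^*=u^*(x,s)$ and is such that \[ J_1=\inf_{u\in U(x)}\sup_{p\in\mathcal{S}_{N-1}}p'h^{x,s}(u)=\sup_{p\in\mathcal{S}_{N-1}}\inf_{u\in U(x)}p'h^{x,s}(u)=J_2 . \]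
   Context: Setting (one-stage ANC game). Let $\mathcal{F}=\{1,\dots,|\mathcal{F}|\}$ be a finite set of transmission regimes and $\mathcal{A}=\{1,\dots,N\}$ a finite set of jammer actions. For each $a\in\mathcal{A}$ let $P(a)$ be an $|\mathcal{F}|\times|\mathcal{F}|$ row-stochastic matrix, and let $q=(q_1,\dots,q_{|\mathcal{F}|})'\in[0,1]^{|\mathcal{F}|}$. Let $F:\mathbb{R}^n\times\mathbb{R}^m\to\mathbb{R}^n$, $\sigma^0:\mathbb{R}^n\times\mathbb{R}^m\to\mathbb{R}$, $\sigma^1:\mathbb{R}^n\to\mathbb{R}$ and $g^0:\mathcal{A}\times\mathcal{F}\to\mathbb{R}$ be given. For a given plant state $x\in\mathbb{R}^n$ and link regime $s\in\mathcal{F}$, the controller chooses $u\in\mathbb{R}^m$ and the jammer chooses a probability vector $p$ in the unit simplex $\mathcal{S}_{N-1}=\{p\in\mathbb{R}^N:p_j\ge0,\sum_jp_j=1\}$; an action $a\in\mathcal{A}$ is drawn according to $p$, then a new regime $s^+$ is drawn with $\mathrm{Pr}(s^+=i)=P_{si}(a)$, then $b\in\{0,1\}$ is drawn with $\mathrm{Pr}(b=1\mid s^+)=q_{s^+}$, and $x^+=F(x,bu)$. The payoff (cost to the controller, reward to the jammer) is $\Sigma(x^+,u,a)=\sigma^0(x,u)+\sigma^1(x^+)-g^0(a,s)$. Its expectation is $\mathbb{E}^{u,p}\Sigma(x^+,u,a)=p'h^{x,s}(u)$, where $h^{x,s}:\mathbb{R}^m\to\mathbb{R}^N$ has components $h^{x,s}_i(u)=(P(i)q)_s\,\Sigma(F(x,u),u,i)+(1-(P(i)q)_s)\,\Sigma(F(x,0),u,i)$,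 with $(P(i)q)_s$ the $s$-th entry of the vector $P(i)q$. The upper and lower values are $J_1=\inf_{u\in\mathbb{R}^m}\sup_{p\in\mathcal{S}_{N-1}}p'h^{x,s}(u)$ and $J_2=\sup_{p\in\mathcal{S}_{N-1}}\inf_{u\in\mathbb{R}^m}p'h^{x,s}(u)$. A saddle point is a pair $(u^*,p^* )\in\mathbb{R}^m\times\mathcal{S}_{N-1}$ with $p'h^{x,s}(u^* )\le(p^* )'h^{x,s}(u^* )\le(p^* )'h^{x,s}(u)$ for all $u\in\mathbb{R}^m$, $p\in\mathcal{S}_{N-1}$ (so that $(p^* )'h^{x,s}(u^* )=J_1=J_2$); $u^*$ is the controller's optimal response. A function $h:\mathbb{R}^m\to\mathbb{R}$ is coercive if there is $\eta:\mathbb{R}_+\to\mathbb{R}$ with $\lim_{y\to+\infty}\eta(y)=+\infty$ and $h(u)\ge\eta(\|u\|)$ for all $u$. *)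

(* R^k is represented by row vectors 'rV[R]_k (normed space with the sup norm;
   coercivity is independent of the choice of norm). *)
From HB Require Import structures.
From mathcomp Require Import all_boot all_order all_algebra.
From mathcomp Require Import all_classical all_reals all_analysis.
Set Implicit Arguments. Unset Strict Implicit. Unset Printing Implicit Defensive.
Import Order.TTheory GRing.Theory Num.Theory.
Import numFieldNormedType.Exports.
Local Open Scope classical_set_scope.
Local Open Scope ring_scope.

Definition simplex (R : realType) (N : nat) : set 'rV[R]_N :=
  [set p | (forall j, 0 <= p 0 j) /\ \sum_(j < N) p 0 j = 1].

Definition row_stochastic (R : realType) (K : nat) (M : 'M[R]_K) : Prop :=
  (forall i j, 0 <= M i j) /\ (forall i, \sum_(j < K) M i j = 1).

Definition convex_fun (R : realType) (m : nat) (f : 'rV[R]_m -> R) : Prop :=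
  forall (u v : 'rV[R]_m) (t : R), 0 <= t <= 1 ->
    f (t *: u + (1 - t) *: v) <= t * f u + (1 - t) * f v.

Definition coercive (R : realType) (m : nat) (f : 'rV[R]_m -> R) : Prop :=
  exists eta : R -> R,
    (eta y @[y --> +oo] --> +oo) /\ (forall u, eta `|u| <= f u).

Section ANC.
Variables (R : realType) (n m K N : nat).
Variables (F : 'rV[R]_n -> 'rV[R]_m -> 'rV[R]_n)
          (sigma0 : 'rV[R]_n -> 'rV[R]_m -> R)
          (sigma1 : 'rV[R]_n -> R)
          (g0 : 'I_N -> 'I_K -> R)
          (P : 'I_N -> 'M[R]_K) (q : 'cV[R]_K).

Definition Sigma (x : 'rV[R]_n) (s : 'I_K) (xp : 'rV[R]_n) (u : 'rV[R]_m)
  (a : 'I_N) : R :=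
  sigma0 x u + sigma1 xp - g0 a s.

Definition hfun (x : 'rV[R]_n) (s : 'I_K) (u : 'rV[R]_m) (i : 'I_N) : R :=
  (P i *m q) s 0 * Sigma x s (F x u) u i
  + (1 - (P i *m q) s 0) * Sigma x s (F x 0) u i.

Definition payoff (x : 'rV[R]_n) (s : 'I_K) (p : 'rV[R]_N) (u : 'rV[R]_m) : R :=
  \sum_(i < N) p 0 i * hfun x s u i.

Definition upper_value (x : 'rV[R]_n) (s : 'I_K) (U : set 'rV[R]_m) : \bar R :=
  ereal_inf [set ereal_sup [set (payoff x s p u)%:E | p in @simplex R N] | u in U].

Definition lower_value (x : 'rV[R]_n) (s : 'I_K) (U : set 'rV[R]_m) : \bar R :=
  ereal_sup [set ereal_inf [set (payoff x s p u)%:E | u in U] | p in @simplex R N].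

Definition saddle_point (x : 'rV[R]_n) (s : 'I_K) (us : 'rV[R]_m)
  (ps : 'rV[R]_N) : Prop :=
  @simplex R N ps /\
  forall (u : 'rV[R]_m) (p : 'rV[R]_N), @simplex R N p ->
    payoff x s p us <= payoff x s ps us <= payoff x s ps u.

End ANC.

From HB Require Import structures.
From mathcomp Require Import all_boot all_order all_algebra.
From mathcomp Require Import all_classical all_reals all_analysis.
From mathcomp Require Import ring lra.
Set Implicit Arguments. Unset Strict Implicit. Unset Printing Implicit Defensive.
Import Order.TTheory GRing.Theory Num.Theory.
Import numFieldNormedType.Exports.
Local Open Scope classical_set_scope.
Local Open Scope ring_scope.

(* The core is a theorem of the alternative for finitely many continuous convex
   functions h_i on a convex set D, in the spirit of Fan, Glicksberg and
   Hoffman: if max_i h_i >= al on D, then some convex combination of the h_i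
   is >= al on D.  For two functions G, H the weight is the supremum of the
   thresholds (al - H u) / (G u - H u) over the points where H u < al.  It is
   admissible because a segment from a point where G >= H to a point where
   G <= H meets the diagonal G = H (intermediate value theorem), and at such a
   point convexity forbids both combinations to drop below al.  Induction on
   the number of functions gives the general case.

   In the game every h^{x,s}_i is a convex combination of the two coercive
   convex functions of the hypothesis, so max_i h^{x,s}_i is continuous and
   coercive and attains its minimum J at some us.  The alternative with al = J
   yields ps with ps'h(u) >= J >= h_i(us) for all u and i: a saddle point of
   value J.  The finite, hence compact, set U(x) = {us(x,s) | s} contains us
   for every s, so the values restricted to U(x) are J as well. *)

Section ConvexAlternative.
Variables (R : realType) (m : nat).
Implicit Types (D : set 'rV[R]_m) (G H : 'rV[R]_m -> R) (u v : 'rV[R]_m).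

Definition convex_rV_set D := forall u v (t : R),
  0 <= t <= 1 -> D u -> D v -> D (t *: u + (1 - t) *: v).

Lemma lt_convex_comb (t a b c : R) :
  0 <= t <= 1 -> a < c -> b < c -> t * a + (1 - t) * b < c.
Proof.
move=> /andP[t0 t1] ac bc; case: (leP a b) => ab.
- have : t * a <= t * b by exact: ler_wpM2l.
  lra.
- have : (1 - t) * b <= (1 - t) * a by apply: ler_wpM2l; lra.
  lra.
Qed.

Lemma ge_convex_comb (t a b c : R) :
  0 <= t <= 1 -> c <= a -> c <= b -> c <= t * a + (1 - t) * b.
Proof.
move=> /andP[t0 t1] ca cb.
have : t * c <= t * a by exact: ler_wpM2l.
have : (1 - t) * c <= (1 - t) * b by apply: ler_wpM2l; lra.
lra.
Qed.

Lemma le_convex_comb_lower (al g h t : R) : h < g ->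
  (al <= t * g + (1 - t) * h) = ((al - h) / (g - h) <= t).
Proof.
move=> hg; rewrite ler_pdivrMr ?subr_gt0 // lerBlDl.
by congr (_ <= _); ring.
Qed.

Lemma le_convex_comb_upper (al g h t : R) : g < h ->
  (al <= t * g + (1 - t) * h) = (t <= (h - al) / (h - g)).
Proof.
move=> gh; rewrite ler_pdivlMr ?subr_gt0 //.
have -> : t * g + (1 - t) * h = h - t * (h - g) by ring.
by rewrite !lerBrDr addrC.
Qed.

Lemma segment_crossing G H u v : continuous G -> continuous H ->
  H u <= G u -> G v <= H v ->
  exists2 c : R, 0 <= c <= 1 &
    G (c *: u + (1 - c) *: v) = H (c *: u + (1 - c) *: v).
Proof.
move=> cG cH Hu Gv; pose w t := t *: u + (1 - t) *: v.
have cw : continuous w.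
  move=> t; apply: cvgD; apply: cvgZr_tmp; first exact: cvg_id.
  by apply: cvgB; [exact: cvg_cst | exact: cvg_id].
have cGHw : {within `[0, 1], continuous (fun t => G (w t) - H (w t))}.
  have cGw : continuous (G \o w) :=
    fun t => continuous_comp (cw t) (cG _).
  have cHw : continuous (H \o w) :=
    fun t => continuous_comp (cw t) (cH _).
  by apply: continuous_subspaceT => t; exact: continuousB (cGw t) (cHw t).
have w0 : w 0 = v by rewrite /w scale0r add0r subr0 scale1r.
have w1 : w 1 = u by rewrite /w scale1r subrr scale0r addr0.
have [c c01 GHc] : exists2 c, c \in `[0, 1] & G (w c) - H (w c) = 0.
  apply: IVT => //.
  by rewrite w0 w1 ge_min le_max !subr_le0 !subr_ge0 Gv Hu orbT.
exists c; first by move: c01; rewrite in_itv.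
by apply/eqP; rewrite -subr_eq0 GHc.
Qed.

Lemma convex_comb_ge_at_either D G H al u v (t : R) :
  convex_rV_set D -> convex_fun G -> convex_fun H -> continuous G -> continuous H ->
  (forall w, D w -> al <= G w \/ al <= H w) ->
  D u -> D v -> H u <= G u -> G v <= H v -> 0 <= t <= 1 ->
  al <= t * G u + (1 - t) * H u \/ al <= t * G v + (1 - t) * H v.
Proof.
move=> cvD cvG cvH cG cH GH_ge Du Dv Hu Gv t01.
case: (leP al (t * G u + (1 - t) * H u)) => [|ltu]; first by left.
right; rewrite leNgt; apply/negP => ltv.
have [c c01 GHc] := segment_crossing cG cH Hu Gv.
set w := c *: u + (1 - c) *: v in GHc.
have Gw_ge : al <= G w by case: (GH_ge w (cvD _ _ _ c01 Du Dv)); rewrite GHc.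
have Gw := cvG u v c c01; have Hw := cvH u v c c01; rewrite -/w in Gw Hw.
have := lt_convex_comb c01 ltu ltv.
case/andP: t01 => t0 t1; case/andP: c01 => c0 c1.
have : t * G w <= t * (c * G u + (1 - c) * G v) by exact: ler_wpM2l.
have : (1 - t) * G w <= (1 - t) * (c * H u + (1 - c) * H v).
  by rewrite GHc; apply: ler_wpM2l; lra.
lra.
Qed.

Lemma convex_alternative2 D G H al :
  convex_rV_set D -> convex_fun G -> convex_fun H -> continuous G -> continuous H ->
  (forall w, D w -> al <= G w \/ al <= H w) ->
  exists2 t : R, 0 <= t <= 1 & forall u, D u -> al <= t * G u + (1 - t) * H u.
Proof.
move=> cvD cvG cvH cG cH GH_ge.
have G_ge u : D u -> H u < al -> al <= G u.
  by move=> Du Hu; case: (GH_ge u Du) => // /(lt_le_trans Hu); rewrite ltxx.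
have H_ge u : D u -> G u < al -> al <= H u.
  by move=> Du Gu; case: (GH_ge u Du) => // /(lt_le_trans Gu); rewrite ltxx.
have [[u0 Du0 Hu0]|H_ge_al] := pselect (exists2 u, D u & H u < al); last first.
  exists 0 => [|u Du]; first by rewrite lexx ler01.
  rewrite mul0r add0r subr0 mul1r leNgt; apply/negP => Hu.
  by apply: H_ge_al; exists u.
pose S := [set (al - H u) / (G u - H u) | u in [set u | D u /\ H u < al]].
have S_le1 : ubound S 1.
  move=> _ [u [Du Hu] <-].
  rewrite -le_convex_comb_lower ?mul1r ?subrr ?mul0r ?addr0; first exact: G_ge.
  exact: lt_le_trans Hu (G_ge u Du Hu).
have S0 : S !=set0 by exists ((al - H u0) / (G u0 - H u0)), u0.
have S_sup : has_sup S by split; last exists 1.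
have S_ge0 : 0 <= sup S.
  apply: le_trans (sup_upper_bound S_sup _); last by exists u0.
  apply: divr_ge0; rewrite subr_ge0; first exact: ltW.
  exact: le_trans (ltW Hu0) (G_ge u0 Du0 Hu0).
exists (sup S) => [|u Du]; first by rewrite S_ge0 ge_sup.
have [Hu|al_le_Hu] := ltP (H u) al.
  rewrite le_convex_comb_lower; last exact: lt_le_trans Hu (G_ge u Du Hu).
  by apply: sup_upper_bound => //; exists u.
have [Gu|al_le_Gu] := ltP (G u) al; last first.
  by apply: ge_convex_comb; rewrite ?S_ge0 ?ge_sup.
have GHu : G u < H u := lt_le_trans Gu (H_ge u Du Gu).
rewrite le_convex_comb_upper //; apply: ge_sup => // _ [v [Dv Hv] <-].
have HGv : H v < G v := lt_le_trans Hv (G_ge v Dv Hv).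
set a := (al - H v) / (G v - H v); set b := (H u - al) / (H u - G u).
rewrite leNgt; apply/negP => ba.
have a_le1 : a <= 1 by apply: S_le1; exists v.
have b_ge0 : 0 <= b by apply: divr_ge0; rewrite subr_ge0 // ltW.
have t01 : 0 <= (b + a) / 2 <= 1 by apply/andP; split; lra.
have := convex_comb_ge_at_either cvD cvG cvH cG cH GH_ge Dv Du (ltW HGv) (ltW GHu) t01.
rewrite le_convex_comb_lower // le_convex_comb_upper // -/a -/b.
by case; lra.
Qed.

Lemma convex_fun_sum r (p : nat -> R) (h : nat -> 'rV[R]_m -> R) :
  (forall i, 0 <= p i) -> (forall i, convex_fun (h i)) ->
  convex_fun (fun u => \sum_(i < r) p i * h i u).
Proof.
move=> p_ge0 cvh u v t t01.
rewrite !mulr_sumr -big_split /=; apply: ler_sum => i _.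
have := ler_wpM2l (p_ge0 i) (cvh i u v t t01); lra.
Qed.

Lemma continuous_sum r (p : nat -> R) (h : nat -> 'rV[R]_m -> R) :
  (forall i, continuous (h i)) -> continuous (fun u => \sum_(i < r) p i * h i u).
Proof.
move=> ch; apply: (continuous_big add_continuous) => i _ u.
by apply: continuousM; [exact: cst_continuous | exact: ch].
Qed.

Lemma convex_setI_sublevel D f al : convex_rV_set D -> convex_fun f ->
  convex_rV_set (D `&` [set u | f u < al]).
Proof.
move=> cvD cvf u v t t01 [Du fu] [Dv fv]; split; first exact: cvD.
exact: le_lt_trans (cvf u v t t01) (lt_convex_comb t01 fu fv).
Qed.

Lemma convex_alternative al N D (h : nat -> 'rV[R]_m -> R) :
  convex_rV_set D -> (forall i, convex_fun (h i)) -> (forall i, continuous (h i)) ->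
  (forall u, D u -> exists2 i, (i < N.+1)%N & al <= h i u) ->
  exists p : nat -> R, [/\ forall i, 0 <= p i, \sum_(i < N.+1) p i = 1 &
    forall u, D u -> al <= \sum_(i < N.+1) p i * h i u].
Proof.
elim: N D => [|N IH] D cvD cvh ch h_ge.
  exists (fun i => (i == 0)%:R); split => [i|| u Du]; rewrite ?big_ord1 ?mul1r //.
  by case: (h_ge u Du) => -[|//] _.
pose D' := D `&` [set u | h N.+1 u < al].
have h_ge' u : D' u -> exists2 i, (i < N.+1)%N & al <= h i u.
  move=> [Du hu]; have [i] := h_ge u Du.
  rewrite ltnS leq_eqVlt => /orP[/eqP -> /(lt_le_trans hu)|iN hi].
    by rewrite ltxx.
  by exists i.
have cvD' : convex_rV_set D' by exact: convex_setI_sublevel.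
have [p' [p'_ge0 p'_sum p'_ge]] := IH D' cvD' cvh ch h_ge'.
pose G u := \sum_(i < N.+1) p' i * h i u.
have [t /andP[t0 t1] t_ge] :
    exists2 t : R, 0 <= t <= 1 & forall u, D u -> al <= t * G u + (1 - t) * h N.+1 u.
  apply: convex_alternative2 => //; [exact: convex_fun_sum | exact: continuous_sum |].
  move=> w Dw; have [hw|] := ltP (h N.+1 w) al; last by right.
  by left; apply: p'_ge.
exists (fun i => if i == N.+1 then 1 - t else t * p' i); split.
- by move=> i; case: eqP => _; [lra | exact: mulr_ge0].
- rewrite big_ord_recr /= eqxx.
  under eq_bigr => i _ do rewrite ltn_eqF //.
  by rewrite -mulr_sumr p'_sum mulr1 subrKC.
move=> u Du; rewrite big_ord_recr /= eqxx.
under eq_bigr => i _ do rewrite ltn_eqF // -mulrA.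
by rewrite -mulr_sumr; exact: t_ge.
Qed.

End ConvexAlternative.

Lemma continuous_bigmax (R : realType) (T : topologicalType) (I : Type) (r : seq I)
    (f0 : T -> R) (f : I -> T -> R) :
  continuous f0 -> (forall i, continuous (f i)) ->
  continuous (fun u => \big[Num.max/f0 u]_(i <- r) f i u).
Proof.
move=> cf0 cf; elim: r => [|i r IHr] u.
  by under eq_fun => ? do rewrite big_nil; exact: cf0.
under eq_fun => ? do rewrite big_cons.
exact: continuous_max (cf i u) (IHr u).
Qed.

Section Minimax.
Variables (R : realType) (m : nat).
Implicit Types (f g : 'rV[R]_m -> R).

Lemma coercive_le f g : coercive f -> (forall u, f u <= g u) -> coercive g.
Proof.
by move=> [eta [eta_oo eta_le]] fg; exists eta; split => // u; apply: le_trans (fg u).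
Qed.

Lemma coercive_has_min f : continuous f -> coercive f ->
  exists us, forall u, f us <= f u.
Proof.
move=> cf [eta [eta_oo eta_le]].
pose A := [set u | f u <= f 0].
have [Y [_ etaY]] := (cvgryPge eta).1 eta_oo (f 0 + 1).
have A_bd u : A u -> `|u| <= Y.
  rewrite /A /= => fu; rewrite leNgt; apply/negP => /etaY etau.
  have := eta_le u; lra.
have cA : compact A.
  apply: bounded_closed_compact.
    exists Y; split; first exact: num_real.
    by move=> y Yy u /A_bd/le_trans; apply; exact: ltW.
  have -> : A = f @^-1` [set r | r <= f 0] by [].
  by apply: (continuous_closedP f).1 => //; exact: closed_le.
have [us _ us_min] := EVT_min_rV (ex_intro _ 0 (lexx _)) cA (continuous_subspaceT cf).
exists us => u; have [Au|nAu] := pselect (A u); first by apply: us_min; rewrite inE.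
apply: le_trans (us_min 0 _) _; first by rewrite inE /A /=.
by move: nAu; rewrite /A /= => /negP; rewrite -ltNge => /ltW.
Qed.

Lemma convex_minimax N (h : 'I_N -> 'rV[R]_m -> R) (i0 : 'I_N) :
  (forall i, convex_fun (h i)) -> (forall i, continuous (h i)) -> coercive (h i0) ->
  exists (us : 'rV[R]_m) (J : R) (ps : 'rV[R]_N),
    [/\ simplex ps, forall i, h i us <= J & forall u, J <= \sum_(i < N) ps 0 i * h i u].
Proof.
case: N h i0 => [_ [] //|N h i0] cvh ch coh.
pose M u := \big[Num.max/h i0 u]_i h i u.
have M_ge i u : h i u <= M u by exact: le_bigmax.
have [us us_min] : exists us, forall u, M us <= M u.
  by apply: coercive_has_min; [exact: continuous_bigmax | exact: coercive_le (M_ge i0)].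
pose h' k := h (inord k).
have [p [p_ge0 p_sum p_ge]] : exists p : nat -> R, [/\ forall i, 0 <= p i,
    \sum_(i < N.+1) p i = 1 & forall u, setT u -> M us <= \sum_(i < N.+1) p i * h' i u].
  apply: convex_alternative => [//|i|i|u _]; [exact: cvh | exact: ch |].
  have [i hi] : exists i, M us <= h i u.
    by have /bigmax_geP[hi0|[i _ hi]] := us_min u; [exists i0 | exists i].
  by exists i => //; rewrite /h' inord_val.
exists us, (M us), (\row_i p i); split => [|//|u].
- by split=> [j|]; [rewrite mxE | under eq_bigr => i _ do rewrite mxE].
have := p_ge u I; congr (_ <= _); apply: eq_bigr => i _.
by rewrite mxE /h' inord_val.
Qed.

End Minimax.

Lemma row_stochastic_mulmx_itv (R : realType) K (M : 'M[R]_K) (q : 'cV[R]_K) i :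
  row_stochastic M -> (forall j, 0 <= q j 0 <= 1) -> 0 <= (M *m q) i 0 <= 1.
Proof.
move=> [M_ge0 M_sum] q01; rewrite mxE; apply/andP; split.
  by apply: sumr_ge0 => j _; apply: mulr_ge0 => //; case/andP: (q01 j).
rewrite -(M_sum i); apply: ler_sum => j _; rewrite ler_piMr //.
by case/andP: (q01 j).
Qed.

Section ConvexComb.
Variables (R : realType) (m : nat) (c : R).
Hypothesis c01 : 0 <= c <= 1.
Implicit Types (f g : 'rV[R]_m -> R).

Lemma convex_fun_comb f g : convex_fun f -> convex_fun g ->
  convex_fun (fun u => c * f u + (1 - c) * g u).
Proof.
move=> cvf cvg u v t t01; case/andP: c01 => c0 c1.
have c1' : 0 <= 1 - c by rewrite subr_ge0.
have := ler_wpM2l c0 (cvf u v t t01); have := ler_wpM2l c1' (cvg u v t t01).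
lra.
Qed.

Lemma continuous_comb f g : continuous f -> continuous g ->
  continuous (fun u => c * f u + (1 - c) * g u).
Proof.
move=> cf cg u; have cst k : {for u, continuous (fun=> k : R)} by exact: cst_continuous.
exact: continuousD (continuousM (cst c) (cf u)) (continuousM (cst (1 - c)) (cg u)).
Qed.

Lemma coercive_comb f g : coercive f -> coercive g ->
  coercive (fun u => c * f u + (1 - c) * g u).
Proof.
move=> [ef [ef_oo ef_le]] [eg [eg_oo eg_le]].
exists (fun y => Num.min (ef y) (eg y)); split => [|u].
  apply/cvgryPge => A; near=> y; rewrite le_min; apply/andP; split; near: y.
    exact: (cvgryPge ef).1 ef_oo A.
  exact: (cvgryPge eg).1 eg_oo A.
set e := Num.min _ _.
have [e_ef e_eg] : e <= ef `|u| /\ e <= eg `|u| by rewrite !ge_min !lexx orbT.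
apply: le_trans (ge_convex_comb c01 e_ef e_eg) _.
case/andP: c01 => c0 c1; have c1' : 0 <= 1 - c by rewrite subr_ge0.
have := ler_wpM2l c0 (ef_le u); have := ler_wpM2l c1' (eg_le u).
lra.
Unshelve. all: by end_near.
Qed.

End ConvexComb.

Lemma simplex_sum_le (R : realType) N (p : 'rV[R]_N) (a : 'I_N -> R) J :
  simplex p -> (forall i, a i <= J) -> \sum_(i < N) p 0 i * a i <= J.
Proof.
move=> [p_ge0 p_sum] aJ; apply: le_trans (_ : \sum_(i < N) p 0 i * J <= J).
  by apply: ler_sum => i _; exact: ler_wpM2l.
by rewrite -mulr_suml p_sum mul1r.
Qed.

Section Game.
Variables (R : realType) (n m K N : nat).
Variables (F : 'rV[R]_n -> 'rV[R]_m -> 'rV[R]_n)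
  (sigma0 : 'rV[R]_n -> 'rV[R]_m -> R) (sigma1 : 'rV[R]_n -> R)
  (g0 : 'I_N -> 'I_K -> R) (P : 'I_N -> 'M[R]_K) (q : 'cV[R]_K).
Variables (x : 'rV[R]_n) (s : 'I_K).

Local Notation h := (hfun F sigma0 sigma1 g0 P q x s).
Local Notation payoff := (payoff F sigma0 sigma1 g0 P q x s).
Local Notation upper_value := (upper_value F sigma0 sigma1 g0 P q x s).
Local Notation lower_value := (lower_value F sigma0 sigma1 g0 P q x s).

Lemma saddle_values J us ps (U : set 'rV[R]_m) :
  simplex ps -> (forall i, h us i <= J) -> (forall u, J <= payoff ps u) -> U us ->
  [/\ upper_value U = J%:E, lower_value U = J%:E &
      saddle_point F sigma0 sigma1 g0 P q x s us ps].
Proof.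
move=> ps_simplex hJ Jp Uus.
have pJ p : simplex p -> payoff p us <= J by move/simplex_sum_le; exact.
split.
- apply/eqP; rewrite eq_le; apply/andP; split.
    apply: ge_ereal_inf; exists (ereal_sup [set (payoff p us)%:E | p in simplex (N:=N)]).
      by exists us.
    by apply: ge_ereal_sup => _ [p p_simplex <-]; rewrite lee_fin; exact: pJ.
  apply: le_ereal_inf_tmp => _ [u Uu <-].
  by apply: le_ereal_sup_tmp; exists (payoff ps u)%:E; [exists ps | rewrite lee_fin].
- apply/eqP; rewrite eq_le; apply/andP; split.
    apply: ge_ereal_sup => _ [p p_simplex <-].
    apply: ge_ereal_inf; exists (payoff p us)%:E; first by exists us.
    by rewrite lee_fin; exact: pJ.
  apply: le_ereal_sup_tmp; exists (ereal_inf [set (payoff ps u)%:E | u in U]).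
    by exists ps.
  by apply: le_ereal_inf_tmp => _ [u Uu <-]; rewrite lee_fin.
- split=> // u p p_simplex; apply/andP; split.
    exact: le_trans (pJ p p_simplex) (Jp us).
  exact: le_trans (pJ ps ps_simplex) (Jp u).
Qed.

Lemma game_saddle : (0 < N)%N ->
  (forall a, row_stochastic (P a)) -> (forall i, 0 <= q i 0 <= 1) ->
  (forall a : 'I_N,
     let f0 := fun u => Sigma sigma0 sigma1 g0 x s (F x 0) u a in
     let f1 := fun u => Sigma sigma0 sigma1 g0 x s (F x u) u a in
     [/\ continuous f0, coercive f0 & convex_fun f0] /\
     [/\ continuous f1, coercive f1 & convex_fun f1]) ->
  exists us (J : R) (ps : 'rV[R]_N),
    [/\ simplex ps, forall i, h us i <= J & forall u, J <= payoff ps u].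
Proof.
move=> N_gt0 P_stoch q01 hf.
have c01 i := row_stochastic_mulmx_itv s (P_stoch i) q01.
apply: (@convex_minimax R m N (fun i u => h u i) (Ordinal N_gt0)).
- by move=> i; case: (hf i) => -[_ _ ?] [_ _ ?]; exact: convex_fun_comb.
- by move=> i; case: (hf i) => -[? _ _] [? _ _]; exact: continuous_comb.
- by case: (hf (Ordinal N_gt0)) => -[_ ? _] [_ ? _]; exact: coercive_comb.
Qed.

End Game.

Theorem theorem1 (R : realType) (n m K N : nat)
  (F : 'rV[R]_n -> 'rV[R]_m -> 'rV[R]_n)
  (sigma0 : 'rV[R]_n -> 'rV[R]_m -> R) (sigma1 : 'rV[R]_n -> R)
  (g0 : 'I_N -> 'I_K -> R) (P : 'I_N -> 'M[R]_K) (q : 'cV[R]_K) :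
  (0 < N)%N ->
  (forall a, row_stochastic (P a)) ->
  (forall i, 0 <= q i 0 <= 1) ->
  (forall (x : 'rV[R]_n) (s : 'I_K) (a : 'I_N),
     let f0 := fun u => Sigma sigma0 sigma1 g0 x s (F x 0) u a in
     let f1 := fun u => Sigma sigma0 sigma1 g0 x s (F x u) u a in
     [/\ continuous f0, coercive f0 & convex_fun f0] /\
     [/\ continuous f1, coercive f1 & convex_fun f1]) ->
  forall x : 'rV[R]_n, exists U : set 'rV[R]_m, compact U /\
    forall s : 'I_K, exists (J : R) (us : 'rV[R]_m) (ps : 'rV[R]_N),
      [/\ upper_value F sigma0 sigma1 g0 P q x s setT = J%:E,
          lower_value F sigma0 sigma1 g0 P q x s setT = J%:E &
          saddle_point F sigma0 sigma1 g0 P q x s us ps] /\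
      [/\ U us,
          upper_value F sigma0 sigma1 g0 P q x s U = J%:E &
          lower_value F sigma0 sigma1 g0 P q x s U = J%:E].
Proof.
move=> N_gt0 P_stoch q01 hf x.
have [u_opt u_optP] := choice (fun s => game_saddle N_gt0 P_stoch q01 (hf x s)).
exists (range u_opt); split.
  by apply: finite_compact; apply: finite_image; exact: finite_finset.
move=> s; have [J [ps [ps_simplex hJ Jp]]] := u_optP s.
exists J, (u_opt s), ps.
have [upT loT sd] := saddle_values (U := setT) ps_simplex hJ Jp I.
have [upU loU _] := saddle_values (U := range u_opt) ps_simplex hJ Jp (imageT _ s).
by split; split.
Qed.
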